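(* Let $N$ be a simple-$\mathcal F$-divisible $R$-module which is supplemented. Then: (a) $N$ is hollow; (b) for every Artinian submodule $V\subsetneq N$ there exists $\mathfrak a_0\in\mathcal F$ with $\mathfrak a_0V=0$, and there is an epimorphism $N/V\twoheadrightarrow N$; (c) if moreover every submodule of $N$ is supplemented, then every nonzero factor module of $N$ is again simple-$\mathcal F$-divisible.
   Context: Throughout, $R$ is a commutative Noetherian local ring, and $\mathcal F$ is a Gabriel topology on $R$: a nonempty set of ideals of $R$ such that (1) if $\mathfrak a\in\mathcal F$ and $\mathfrak a\subseteq\mathfrak b$ then $\mathfrak b\in\mathcal F$; (2) if $\mathfrak a,\mathfrak b\in\mathcal F$ then $\mathfrak a\cap\mathfrak b\in\mathcal F$; (3) if $\mathfrak b$ is an ideal and there is $\mathfrak a\in\mathcal F$ with $(\mathfrak b:r)\in\mathcal F$ for all $r\in\mathfrak a$, then $\mathfrak b\in\mathcal F$. A module $X$ is $\mathcal F$-divisible if $\mathfrak aX=X$ for all $\mathfrak a\in\mathcal F$. $N$ is simple-$\mathcal F$-divisible if $N\ne0$, $N$ is $\mathcal F$-divisible, and no submodule $0\neq V\subsetneq N$ is $\mathcal F$-divisible. A module $N$ is supplemented if for every submodule $V\subseteq N$ there is a submodule $W$ (a supplement of $V$) which is minimal among submodules with $V+W=N$. A module $N\ne0$ is hollow (couniform) if every proper submodule $V\subsetneq N$ is small in $N$, i.e. $V+W=N$ implies $W=N$. *)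

From HB Require Import structures.
From mathcomp Require Import all_boot all_order all_algebra.
Set Implicit Arguments. Unset Strict Implicit. Unset Printing Implicit Defensive.
Import GRing.Theory.
Local Open Scope ring_scope.

Section Defs.
Variable R : comNzRingType.

Definition is_ideal (I : R -> Prop) : Prop :=
  [/\ I 0, (forall x y, I x -> I y -> I (x + y)) & (forall r x, I x -> I (r * x))].

Definition subI (I J : R -> Prop) : Prop := forall x, I x -> J x.

Definition colon (b : R -> Prop) (r : R) : R -> Prop := fun x => b (x * r).

Definition noetherian_ring : Prop :=
  forall I : nat -> R -> Prop, (forall n, is_ideal (I n)) ->
    (forall n, subI (I n) (I n.+1)) ->
    exists m, forall n, (m <= n)%N -> subI (I n) (I m).

Definition local_ring : Prop :=
  exists m : R -> Prop, [/\ is_ideal m, ~ m 1 &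
    forall I, is_ideal I -> ~ I 1 -> subI I m].

Definition gabriel_topology (F : (R -> Prop) -> Prop) : Prop :=
  [/\ (forall a, F a -> is_ideal a),
      (exists a, F a),
      (forall a b, F a -> is_ideal b -> subI a b -> F b),
      (forall a b, F a -> F b -> F (fun x => a x /\ b x)) &
      (forall b, is_ideal b ->
         (exists2 a, F a & forall r, a r -> F (colon b r)) -> F b)].

Variable N : lmodType R.

Definition submodule (V : N -> Prop) : Prop :=
  [/\ V 0, (forall x y, V x -> V y -> V (x + y)) & (forall r x, V x -> V (r *: x))].

Definition subM (V W : N -> Prop) : Prop := forall x, V x -> W x.

Definition idealmul (a : R -> Prop) (X : N -> Prop) : N -> Prop :=
  fun y => exists s : seq (R * N),
    (forall p, p \in s -> a p.1 /\ X p.2) /\ y = \sum_(p <- s) p.1 *: p.2.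

Definition addM (V W : N -> Prop) : N -> Prop :=
  fun y => exists v w, [/\ V v, W w & y = v + w].

Definition eqM (V W : N -> Prop) : Prop := forall x, V x <-> W x.

Definition fullM : N -> Prop := fun _ => True.

Definition F_divisible (F : (R -> Prop) -> Prop) (X : N -> Prop) : Prop :=
  forall a, F a -> eqM (idealmul a X) X.

Definition nonzeroM (V : N -> Prop) : Prop := exists2 x, V x & x <> 0.

Definition simple_F_divisible (F : (R -> Prop) -> Prop) : Prop :=
  [/\ nonzeroM fullM, F_divisible F fullM &
      forall V, submodule V -> nonzeroM V -> (exists x, ~ V x) ->
        ~ F_divisible F V].

Definition supplement_in (U V W : N -> Prop) : Prop :=
  [/\ submodule W, subM W U, eqM (addM V W) U &
      forall W', submodule W' -> subM W' W -> eqM (addM V W') U -> subM W W'].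

Definition supplemented_in (U : N -> Prop) : Prop :=
  forall V, submodule V -> subM V U -> exists W, supplement_in U V W.

Definition supplemented : Prop := supplemented_in fullM.

(** N is hollow: N <> 0 and every proper submodule is small *)
Definition hollow : Prop :=
  nonzeroM fullM /\
  forall V, submodule V -> (exists x, ~ V x) ->
    forall W, submodule W -> eqM (addM V W) fullM -> eqM W fullM.

Definition artinian_in (V : N -> Prop) : Prop :=
  forall C : nat -> N -> Prop, (forall n, submodule (C n)) ->
    (forall n, subM (C n) V) -> (forall n, subM (C n.+1) (C n)) ->
    exists m, forall n, (m <= n)%N -> subM (C m) (C n).

End Defs.

From HB Require Import structures.
From mathcomp Require Import all_boot all_order all_algebra.
From Stdlib Require Import Classical ClassicalEpsilon.
Import GRing.Theory.
Local Open Scope ring_scope.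
Set Implicit Arguments. Unset Strict Implicit. Unset Printing Implicit Defensive.

(** The key observation is [supplement_F_divisible]: if W is a supplement of K
  in U and U = K + aU for every a in F, then K + aW = U as well, so by
  minimality aW = W, i.e. W is F-divisible.  In a simple-F-divisible module N
  this forces every supplement of a proper submodule to be all of N, which
  gives (a): N is hollow.  For (c), given an epimorphism g : N ->> Q and a
  proper nonzero F-divisible V' of Q, a supplement of ker g in g^-1(V') would
  be a proper nonzero F-divisible submodule of N.  For (b), an Artinian proper
  submodule V contains a minimal submodule U with aV <= U for some a in F; by
  axiom (3) of Gabriel topologies U is F-divisible, hence U = 0 and aV = 0.
  Since R is Noetherian, a = (r1, ..., rk), so N = aN = r1 N + ... + rk N, and
  hollowness yields one ri with ri N = N: multiplication by ri is the required
  epimorphism N/V ->> N. *)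

Section IdealMul.
Variables (R : comNzRingType) (N : lmodType R).
Implicit Types (V W K U X : N -> Prop) (a : R -> Prop).

Lemma idealmul_ind a X (P : N -> Prop) :
  P 0 -> (forall x y, P x -> P y -> P (x + y)) ->
  (forall r x, a r -> X x -> P (r *: x)) -> subM (idealmul a X) P.
Proof.
move=> P0 PD PZ y [s [Hs ->]]; elim: s Hs => [|p s IH] Hs; first by rewrite big_nil.
rewrite big_cons; apply: PD.
  by have [] := Hs p (mem_head _ _); apply: PZ.
by apply: IH => q Hq; apply: Hs; rewrite inE Hq orbT.
Qed.

Lemma idealmul_single a X r x : a r -> X x -> idealmul a X (r *: x).
Proof.
move=> ar Xx; exists [:: (r, x)]; split; last by rewrite big_seq1.
by move=> p; rewrite inE => /eqP ->.
Qed.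

Lemma idealmul_submodule a X : is_ideal a -> submodule (idealmul a X).
Proof.
case=> _ _ aM; split.
- by exists [::]; rewrite big_nil.
- move=> x y [s1 [H1 ->]] [s2 [H2 ->]]; exists (s1 ++ s2); rewrite big_cat.
  by split=> // p; rewrite mem_cat => /orP [] ?; [apply: H1 | apply: H2].
- move=> r x [s [H ->]]; exists [seq (r * p.1, p.2) | p <- s]; split.
    by move=> p /mapP [q /H [aq Xq] ->]; split=> //; apply: aM.
  by rewrite big_map scaler_sumr; apply: eq_bigr => p _; rewrite scalerA.
Qed.

Lemma idealmul_sub a V : submodule V -> subM (idealmul a V) V.
Proof. by case=> V0 VD VZ; apply: idealmul_ind => // r x _; apply: VZ. Qed.

Lemma addM_closed K W : submodule K -> submodule W ->
  forall x y, addM K W x -> addM K W y -> addM K W (x + y).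
Proof.
move=> [_ KD _] [_ WD _] x y [k [w [Hk Hw ->]]] [k' [w' [Hk' Hw' ->]]].
by exists (k + k'), (w + w'); split; [apply: KD | apply: WD | rewrite addrACA].
Qed.

Lemma idealmul_addM a K W : is_ideal a -> submodule K ->
  subM (idealmul a (addM K W)) (addM K (idealmul a W)).
Proof.
move=> ia sK; have sW := idealmul_submodule W ia.
apply: idealmul_ind.
- by exists 0, 0; split; [case: sK | case: sW | rewrite addr0].
- exact: addM_closed.
- move=> r x ar [k [w [Hk Hw ->]]]; exists (r *: k), (r *: w); split.
  + by case: sK => _ _; apply.
  + exact: idealmul_single.
  + by rewrite scalerDr.
Qed.

End IdealMul.

Section LinearMaps.
Variables (R : comNzRingType) (N Q : lmodType R) (g : {linear N -> Q}).
Implicit Types (a : R -> Prop).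

Lemma zero_submodule : submodule (fun q : Q => q = 0).
Proof.
by split=> [|x y -> ->|r x ->]; rewrite ?addr0 ?scaler0.
Qed.

Lemma preimage_submodule (V : Q -> Prop) :
  submodule V -> submodule (fun x => V (g x)).
Proof.
case=> V0 VD VZ; split=> [|x y Vx Vy|r x Vx]; rewrite ?linear0 ?linearD ?linearZ_LR.
- exact: V0.
- exact: VD.
- exact: VZ.
Qed.

Lemma idealmul_image a (X : N -> Prop) (Y : Q -> Prop) :
  is_ideal a -> (forall x, X x -> Y (g x)) ->
  forall x, idealmul a X x -> idealmul a Y (g x).
Proof.
move=> ia XY; have [Y0 YD _] := idealmul_submodule Y ia.
apply: (idealmul_ind (P := fun x => idealmul a Y (g x))).
- by rewrite linear0.
- by move=> x y ? ?; rewrite linearD; apply: YD.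
- by move=> r x ar Xx; rewrite linearZ_LR; apply: idealmul_single => //; apply: XY.
Qed.

Lemma idealmul_lift a (X : N -> Prop) (Y : Q -> Prop) :
  is_ideal a -> (forall q, Y q -> exists2 x, X x & g x = q) ->
  forall q, idealmul a Y q -> exists2 x, idealmul a X x & g x = q.
Proof.
move=> ia lift; have [X0 XD _] := idealmul_submodule X ia.
apply: idealmul_ind.
- by exists 0; rewrite ?linear0.
- move=> _ _ [x1 H1 <-] [x2 H2 <-].
  by exists (x1 + x2); [apply: XD | rewrite linearD].
- move=> r q ar /lift [x Xx <-].
  by exists (r *: x); [apply: idealmul_single | rewrite linearZ_LR].
Qed.

End LinearMaps.

Section Supplements.
Variables (R : comNzRingType) (N : lmodType R) (F : (R -> Prop) -> Prop).
Hypothesis F_ideal : forall a, F a -> is_ideal a.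

(** A supplement W of K in U is F-divisible as soon as U = K + aU for all a
    in F: then K + aW = U too, and minimality of W gives W <= aW. *)
Lemma supplement_F_divisible (U K W : N -> Prop) :
  submodule K -> supplement_in U K W ->
  (forall a, F a -> subM U (addM K (idealmul a U))) -> F_divisible F W.
Proof.
move=> sK [sW WU KW_U W_min] U_div a Fa.
have ia := F_ideal Fa.
have aW_W : subM (idealmul a W) W by apply: idealmul_sub.
have aU_KW : subM (idealmul a U) (idealmul a (addM K W)).
  have [P0 PD _] := idealmul_submodule (addM K W) ia.
  apply: idealmul_ind => // r x ar /KW_U Hx; exact: idealmul_single.
have K_aW : eqM (addM K (idealmul a W)) U.
  move=> x; split.
    by move=> [k [w [Hk /aW_W Hw ->]]]; apply/KW_U; exists k, w.
  move=> /(U_div a Fa) [k [y [Hk /aU_KW Hy ->]]].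
  have [k' [y' [Hk' Hy' ->]]] := idealmul_addM ia sK Hy.
  exists (k + k'), y'; split=> //; last by rewrite addrA.
  by case: sK => _ + _; apply.
have W_aW := W_min _ (idealmul_submodule W ia) aW_W K_aW.
by move=> x; split; [apply: aW_W | apply: W_aW].
Qed.

End Supplements.

Section Artinian.
Variables (R : comNzRingType) (N : lmodType R).

(** In an Artinian submodule every nonempty family of submodules has a minimal
    member (otherwise dependent choice builds a strictly descending chain). *)
Lemma artinian_minimal (V : N -> Prop) (S : (N -> Prop) -> Prop) U0 :
  artinian_in V -> (forall U, S U -> submodule U /\ subM U V) -> S U0 ->
  exists2 U, S U & forall U', S U' -> subM U' U -> subM U U'.
Proof.
move=> art S_sub SU0; apply: NNPP => no_min.
have smaller U : exists U', S U -> [/\ S U', subM U' U & ~ subM U U'].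
  case: (classic (S U)) => SU; last by exists U.
  apply: NNPP => no_smaller; apply: no_min; exists U => // U' SU' U'U.
  apply: NNPP => UU'; apply: no_smaller; exists U' => _; by split.
pose next U := proj1_sig (constructive_indefinite_description _ (smaller U)).
have nextP U : S U -> [/\ S (next U), subM (next U) U & ~ subM U (next U)].
  exact: (proj2_sig (constructive_indefinite_description _ (smaller U))).
pose C n := iter n next U0.
have SC n : S (C n) by elim: n => [|n IH] //=; case: (nextP _ IH).
have [m Hm] := art C (fun n => (S_sub _ (SC n)).1) (fun n => (S_sub _ (SC n)).2)
  (fun n => let: And3 _ h _ := nextP _ (SC n) in h).
by case: (nextP _ (SC m)) => _ _; apply; apply: (Hm m.+1).
Qed.

End Artinian.

Section Noetherian.
Variable R : comNzRingType.

Definition ideal_span (s : seq R) : R -> Prop :=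
  fun x => exists c : nat -> R, x = \sum_(i < size s) c i * s`_i.

Lemma ideal_span_ideal s : is_ideal (ideal_span s).
Proof.
split.
- by exists (fun _ => 0); rewrite big1 // => i _; rewrite mul0r.
- move=> x y [c ->] [d ->]; exists (fun i => c i + d i); rewrite -big_split /=.
  by apply: eq_bigr => i _; rewrite mulrDl.
- move=> r x [c ->]; exists (fun i => r * c i); rewrite mulr_sumr.
  by apply: eq_bigr => i _; rewrite mulrA.
Qed.

Lemma ideal_span_cons x s :
  subI (ideal_span s) (ideal_span (x :: s)) /\ ideal_span (x :: s) x.
Proof.
split.
  move=> y [c ->]; exists (fun i => if i is j.+1 then c j else 0).
  by rewrite /= big_ord_recl /= mul0r add0r.
exists (fun i => if i is 0 then 1 else 0).
by rewrite /= big_ord_recl /= mul1r big1 ?addr0 // => i _; rewrite mul0r.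
Qed.

(** Every ideal of a Noetherian ring is finitely generated: otherwise adding
    one new element at a time gives a strictly ascending chain. *)
Lemma noetherian_finitely_generated (a : R -> Prop) :
  noetherian_ring R -> is_ideal a ->
  exists2 s, (forall r, r \in s -> a r) & subI a (ideal_span s).
Proof.
move=> noeth ia; apply: NNPP => not_fg.
have new s : exists x, (forall r, r \in s -> a r) -> a x /\ ~ ideal_span s x.
  case: (classic (forall r, r \in s -> a r)) => sa; last by exists 0.
  apply: NNPP => no_new; apply: not_fg; exists s => // x ax.
  apply: NNPP => nspan; apply: no_new; exists x => _; by split.
pose pick s := proj1_sig (constructive_indefinite_description _ (new s)).
have pickP s : (forall r, r \in s -> a r) -> a (pick s) /\ ~ ideal_span s (pick s).
  exact: (proj2_sig (constructive_indefinite_description _ (new s))).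
pose L n := iter n (fun s => pick s :: s) [::].
have La n r : r \in L n -> a r.
  elim: n r => [|n IH] r //=; rewrite inE => /orP [/eqP ->|]; last exact: IH.
  by case: (pickP _ IH).
have [m Hm] := noeth (fun n => ideal_span (L n)) (fun n => ideal_span_ideal _)
  (fun n => (ideal_span_cons (pick (L n)) (L n)).1).
case: (pickP _ (La m)) => _; apply; apply: (Hm m.+1) => //.
exact: (ideal_span_cons (pick (L m)) (L m)).2.
Qed.

End Noetherian.

Section Hollow.
Variables (R : comNzRingType) (N : lmodType R).

Definition scale_image (r : R) : N -> Prop := fun n => exists x, r *: x = n.

Definition scaled_sum (s : seq R) : N -> Prop :=
  fun n => exists f : nat -> N, n = \sum_(i < size s) s`_i *: f i.

Lemma scale_image_submodule r : submodule (scale_image r).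
Proof.
split.
- by exists 0; rewrite scaler0.
- by move=> _ _ [x <-] [y <-]; exists (x + y); rewrite scalerDr.
- by move=> r' _ [x <-]; exists (r' *: x); rewrite !scalerA mulrC.
Qed.

Lemma scaled_sum_submodule s : submodule (scaled_sum s).
Proof.
split.
- by exists (fun _ => 0); rewrite big1 // => i _; rewrite scaler0.
- move=> x y [c ->] [d ->]; exists (fun i => c i + d i); rewrite -big_split /=.
  by apply: eq_bigr => i _; rewrite scalerDr.
- move=> r x [c ->]; exists (fun i => r *: c i); rewrite scaler_sumr.
  by apply: eq_bigr => i _; rewrite !scalerA mulrC.
Qed.

Lemma scaled_sum_cons r s n :
  scaled_sum (r :: s) n -> addM (scale_image r) (scaled_sum s) n.
Proof.
move=> [c ->]; exists (r *: c 0), (\sum_(i < size s) s`_i *: c i.+1).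
by split; [exists (c 0) | exists (fun i => c i.+1) | rewrite /= big_ord_recl].
Qed.

(** In a hollow module, if N = s_1 N + ... + s_k N then N = s_i N for some i:
    either s_1 N = N, or s_1 N is small and N = s_2 N + ... + s_k N. *)
Lemma hollow_scaled_sum s : hollow N -> (forall n, scaled_sum s n) ->
  exists2 r, r \in s & forall n, scale_image r n.
Proof.
move=> [[n0 _ n0_nz] small]; elim: s => [|r s IH] N_sum.
  by case: n0_nz; have [c ->] := N_sum n0; rewrite big_ord0.
case: (classic (forall n, scale_image r n)) => [rN_full|rN_proper].
  by exists r; rewrite ?mem_head.
have [r' r's r'N_full] : exists2 r', r' \in s & forall n, scale_image r' n.
  apply: IH => n.
  have [x rN_x] : exists x, ~ scale_image r x.
    by apply: NNPP => H; apply: rN_proper => x; apply: NNPP => ?; apply: H; exists x.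
  have N_eq : eqM (addM (scale_image r) (scaled_sum s)) (@fullM _ N).
    by move=> y; split=> // _; apply: scaled_sum_cons.
  by have [_ /(_ I)] := small _ (scale_image_submodule r) (ex_intro _ x rN_x) _
    (scaled_sum_submodule s) N_eq n.
by exists r'; rewrite // inE r's orbT.
Qed.

End Hollow.

Section SimpleFDivisible.
Variables (R : comNzRingType) (N : lmodType R) (F : (R -> Prop) -> Prop).
Hypothesis gF : gabriel_topology F.
Hypothesis sF : simple_F_divisible N F.

Lemma gabriel_ideal a : F a -> is_ideal a.
Proof. by case: gF => H *; apply: H. Qed.

Lemma N_F_divisible a : F a -> forall x : N, idealmul a (@fullM _ N) x.
Proof. by case: sF => _ N_div _ Fa x; apply/(N_div a Fa). Qed.

(** A supplement in N of a proper submodule is all of N: it is nonzero and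
    F-divisible, so it cannot be proper. *)
Lemma supplement_of_proper_full (V W : N -> Prop) :
  submodule V -> (exists x, ~ V x) -> supplement_in (@fullM _ N) V W ->
  forall x, W x.
Proof.
move=> sV [x0 V_x0] W_supp.
have W_div : F_divisible F W.
  apply: (supplement_F_divisible gabriel_ideal sV W_supp) => a Fa x _.
  by exists 0, x; split; [case: sV | apply: N_F_divisible | rewrite add0r].
case: (W_supp) => sW _ VW_N _.
have W_nz : nonzeroM W.
  have [v [w [Vv Ww x0_eq]]] : addM V W x0 by apply/VW_N.
  by exists w => // w0; apply: V_x0; rewrite x0_eq w0 addr0.
apply: NNPP => /not_all_ex_not W_proper.
by case: sF => _ _ /(_ W sW W_nz W_proper).
Qed.

(** Part (a): N is hollow.  If V + W = N with V proper and W proper, a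
    supplement W2 of W is all of N, and then V is a smaller complement of W. *)
Lemma simple_F_divisible_hollow : supplemented N -> hollow N.
Proof.
move=> N_supp; split; first by case: sF.
move=> V sV V_proper W sW VW_N x; split=> // _; apply: NNPP => W_x.
have [W2 W2_supp] := N_supp W sW (fun _ _ => I).
have W2_full := supplement_of_proper_full sW (ex_intro _ x W_x) W2_supp.
have WV_N : eqM (addM W V) (@fullM _ N).
  move=> y; split=> // _; have [v [w [Vv Ww ->]]] : addM V W y by apply/VW_N.
  by exists w, v; rewrite addrC.
case: W2_supp => _ _ _ /(_ V sV (fun y _ => W2_full y) WV_N) W2_V.
by case: V_proper => y; apply; apply: W2_V.
Qed.

Lemma quotient_simple_F_divisible :
  (forall U : N -> Prop, submodule U -> supplemented_in U) ->
  forall (Q : lmodType R) (g : {linear N -> Q}),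
    (forall q, exists x, g x = q) -> (exists q : Q, q <> 0) ->
    simple_F_divisible Q F.
Proof.
move=> all_supp Q g g_onto [q0 q0_nz]; split; first by exists q0.
  move=> a Fa q; split=> // _; have [x <-] := g_onto q.
  exact: idealmul_image (gabriel_ideal Fa) _ _ (N_F_divisible Fa x).
move=> V' sV' [q1 V'q1 q1_nz] [q2 V'_q2] V'_div.
pose U x := V' (g x); pose K x := g x = 0.
have sU : submodule U := preimage_submodule g sV'.
have sK : submodule K := preimage_submodule g (zero_submodule Q).
have KU : subM K U by move=> x Kx; rewrite /U Kx; case: sV'.
have [W W_supp] := all_supp U sU K sK KU.
have W_div : F_divisible F W.
  apply: (supplement_F_divisible gabriel_ideal sK W_supp) => a Fa u Uu.
  have U_lift q : V' q -> exists2 x, U x & g x = q.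
    by move=> V'q; have [x gx] := g_onto q; exists x; rewrite /U gx.
  have [y aUy gy] := idealmul_lift (gabriel_ideal Fa) U_lift (proj2 (V'_div a Fa _) Uu).
  exists (u - y), y; split=> //; last by rewrite subrK.
  by rewrite /K linearB gy subrr.
case: W_supp => sW WU KW_U _.
case: sF => _ _ /(_ W sW); apply=> //.
  have [x gx] := g_onto q1.
  have [k [w [Kk Ww x_eq]]] : addM K W x by apply/KW_U; rewrite /U gx.
  by exists w => // w0; apply: q1_nz; rewrite -gx x_eq linearD Kk w0 linear0 addr0.
by have [x gx] := g_onto q2; exists x => /WU; rewrite /U gx.
Qed.

(** If aV <= U and b lies in F, then so does the ideal of all x with
    xV <= bU, by axiom (3): its colon ideal at any r in a contains b. *)
Lemma divisor_ideal_F (V U : N -> Prop) a b :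
  submodule U -> F a -> F b -> subM (idealmul a V) U ->
  F (fun x => forall v, V v -> idealmul b U (x *: v)).
Proof.
move=> sU Fa Fb aV_U.
have [_ _ F_up _ F_colon] := gF.
have [bU0 bUD bUZ] := idealmul_submodule U (gabriel_ideal Fb).
pose c x := forall v, V v -> idealmul b U (x *: v).
have ic : is_ideal c.
  split=> [v _|x y cx cy v Vv|r x cx v Vv].
  - by rewrite scale0r.
  - by rewrite scalerDl; apply: bUD; [apply: cx | apply: cy].
  - by rewrite -scalerA; apply: bUZ; apply: cx.
apply: F_colon => //; exists a => // r ar.
apply: (F_up b) => //.
  case: ic => c0 cD cM; split; rewrite /colon.
  - by rewrite mul0r.
  - by move=> x y ? ?; rewrite mulrDl; apply: cD.
  - by move=> r' x ?; rewrite -mulrA; apply: cM.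
move=> x bx v Vv; rewrite /colon -scalerA; apply: idealmul_single => //.
by apply: aV_U; apply: idealmul_single.
Qed.

(** Take U <= V minimal with aV <= U for some a in F; for b in F
    the submodule bU is again of this kind, so U = bU, and U = 0. *)
Lemma artinian_annihilated (V : N -> Prop) :
  submodule V -> (exists x, ~ V x) -> artinian_in V ->
  exists a, F a /\ forall r v, a r -> V v -> r *: v = 0.
Proof.
move=> sV [x0 V_x0] art.
have [_ [a1 Fa1] _ _ _] := gF.
pose S U := [/\ submodule U, subM U V & exists2 a, F a & subM (idealmul a V) U].
have [U [sU UV [a Fa aV_U]] U_min] :
    exists2 U, S U & forall U', S U' -> subM U' U -> subM U U'.
  apply: (artinian_minimal (U0 := V) art); first by move=> U [].
  by split=> //; exists a1 => //; apply: idealmul_sub.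
have U_div : F_divisible F U.
  move=> b Fb; have bU_U : subM (idealmul b U) U by apply: idealmul_sub.
  suff U_bU : subM U (idealmul b U) by move=> x; split; [apply: bU_U | apply: U_bU].
  have sbU := idealmul_submodule U (gabriel_ideal Fb).
  apply: U_min => //; split=> //; first by move=> x /bU_U /UV.
  exists (fun x => forall v, V v -> idealmul b U (x *: v)).
    exact: divisor_ideal_F sU Fa Fb aV_U.
  by case: sbU => ? ? _; apply: idealmul_ind => // r x cr Vx; apply: cr.
have U0 x : U x -> x = 0.
  move=> Ux; apply: NNPP => x_nz.
  by case: sF => _ _ /(_ U sU (ex_intro2 _ _ x Ux x_nz)); apply=> //; exists x0 => /UV.
by exists a; split=> // r v ar Vv; apply: U0; apply: aV_U; apply: idealmul_single.
Qed.

Lemma F_ideal_scaled_sum a s :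
  F a -> subI a (ideal_span s) -> forall n : N, scaled_sum s n.
Proof.
move=> Fa a_span n; have [sT0 sTD _] := scaled_sum_submodule N s.
apply: (idealmul_ind (X := @fullM _ N)) (N_F_divisible Fa n) => // r x /a_span [c ->] _.
exists (fun i => c i *: x); rewrite scaler_suml.
by apply: eq_bigr => i _; rewrite scalerA mulrC.
Qed.

(** Part (b), second half: some r in the annihilating ideal satisfies rN = N,
    so multiplication by r is an epimorphism N ->> N killing V. *)
Lemma artinian_epimorphism (V : N -> Prop) a :
  noetherian_ring R -> hollow N -> F a ->
  (forall r v, a r -> V v -> r *: v = 0) ->
  exists f : {linear N -> N}, (forall y, exists x, f x = y) /\ (forall v, V v -> f v = 0).
Proof.
move=> noeth N_hollow Fa aV0.
have [s s_a a_span] := noetherian_finitely_generated noeth (gabriel_ideal Fa).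
have [r r_s rN_full] := hollow_scaled_sum N_hollow (F_ideal_scaled_sum Fa a_span).
exists (r \*: idfun); split; first by move=> y; have [x <-] := rN_full y; exists x.
by move=> v Vv; apply: aV0 (s_a _ r_s) Vv.
Qed.

End SimpleFDivisible.

Theorem lemma3p1 (R : comNzRingType) (F : (R -> Prop) -> Prop) (N : lmodType R) :
  noetherian_ring R -> local_ring R -> gabriel_topology F ->
  simple_F_divisible N F -> supplemented N ->
  (* (a) *)
  hollow N /\
  (* (b) *)
  (forall V : N -> Prop, submodule V -> (exists x, ~ V x) -> artinian_in V ->
     (exists a0, F a0 /\ forall r v, a0 r -> V v -> r *: v = 0) /\
     (* epimorphism N/V ->> N, i.e. a surjective linear map N -> N killing V *)
     (exists f : {linear N -> N},
        (forall y, exists x, f x = y) /\ (forall v, V v -> f v = 0))) /\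
  (* (c) *)
  ((forall U : N -> Prop, submodule U -> supplemented_in U) ->
   forall (Q : lmodType R) (g : {linear N -> Q}),
     (forall q, exists x, g x = q) -> (exists q : Q, q <> 0) ->
     simple_F_divisible Q F).
Proof.
move=> noeth _ gF sF N_supp.
have N_hollow := simple_F_divisible_hollow gF sF N_supp.
split=> //; split; last exact: quotient_simple_F_divisible.
move=> V sV V_proper V_art.
have [a [Fa aV0]] := artinian_annihilated gF sF sV V_proper V_art.
split; first by exists a.
exact: (artinian_epimorphism gF sF noeth N_hollow Fa aV0).
Qed.
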